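(* Let $(\mathfrak g,D)$ be a difference Lie algebra over $\mathbb R$. Then the map sending an infinitesimal deformation generated by $(\hat\omega,\hat D)$ to the class $[(\hat\omega,\hat D)]$ induces a bijection between equivalence classes of infinitesimal deformations of $(\mathfrak g,D)$ and the second regular cohomology group $\mathcal H^2(\mathfrak g,D)$.
   Context: A difference Lie algebra $(\mathfrak g,D)$: a Lie algebra $\mathfrak g$ with linear $D$ satisfying $D[x,y]=[x,D(y)]-[y,D(x)]+[D(x),D(y)]$. On $\mathbb R[t]/(t^2)\otimes\mathfrak g$ extend the bracket bilinearly and $D$ linearly over $\mathbb R[t]/(t^2)$. Linear maps $\hat\omega:\wedge^2\mathfrak g\to\mathfrak g$, $\hat D:\mathfrak g\to\mathfrak g$ generate an infinitesimal deformation if $[\cdot,\cdot]_t=[\cdot,\cdot]+t\hat\omega$ is a Lie bracket on $\mathbb R[t]/(t^2)\otimes\mathfrak g$ and $D_t=D+t\hat D$ is a difference operator for it. Two infinitesimal deformations $([\cdot,\cdot]^1_t,D^1_t)$, $([\cdot,\cdot]^2_t,D^2_t)$ are equivalent if there is $N\in\mathrm{Hom}(\mathfrak g,\mathfrak g)$ such that $\varphi_t=\mathrm{Id}+tN$ satisfies $\varphi_t[x,y]^1_t=[\varphi_tx,\varphi_ty]^2_t$ for all $x,y\in\mathfrak g$ and $D^2_t\circ\varphi_t=\varphi_t\circ D^1_t$ as $\mathbb R[t]/(t^2)$-module maps. Regular cohomology: $C^1(\mathfrak g,D)=\mathrm{Hom}(\mathfrak g,\mathfrak g)$, $C^n(\mathfrak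 g,D)=\mathrm{Hom}(\wedge^n\mathfrak g,\mathfrak g)\oplus\mathrm{Hom}(\wedge^{n-1}\mathfrak g,\mathfrak g)$ ($n\ge2$), $\bar\delta(f,\theta)=(d^{CE}_{\mathrm{ad}}f,d^{CE}_{\mathrm{ad}_D}\theta+T(f))$ (for $n=1$, $\bar\delta f=(d^{CE}_{\mathrm{ad}}f,T(f))$), where $d^{CE}_{\mathrm{ad}}$, $d^{CE}_{\mathrm{ad}_D}$ are Chevalley–Eilenberg differentials with coefficients in the adjoint representation and in $\mathrm{ad}_D(x)u=[x,u]+[D(x),u]$, and $T(f)(x_1,\dots,x_n)=(-1)^n\big(\sum_{k=1}^n\sum_{1\le i_1<\cdots<i_k\le n}f(y_1,\dots,y_n)-D(f(x_1,\dots,x_n))\big)$ with $y_j=D(x_j)$ for $j\in\{i_1,\dots,i_k\}$, $y_j=x_j$ otherwise. $\mathcal H^n(\mathfrak g,D)$ is the $n$-th cohomology of this complex. *)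

From HB Require Import structures.
From mathcomp Require Import all_boot all_algebra.
From mathcomp Require Import reals.
Set Implicit Arguments.
Unset Strict Implicit.
Unset Printing Implicit Defensive.
Import GRing.Theory.
Local Open Scope ring_scope.

Section Defs.
Variables (R : realType) (V : lmodType R).

Definition is_linear (f : V -> V) : Prop :=
  forall (a : R) (x y : V), f (a *: x + y) = a *: f x + f y.

Definition is_bilinear (b : V -> V -> V) : Prop :=
  (forall x, is_linear (b x)) /\ (forall y, is_linear (fun x => b x y)).

Definition alt2 (b : V -> V -> V) : Prop :=
  is_bilinear b /\ (forall x, b x x = 0).

Definition is_lie_bracket (br : V -> V -> V) : Prop :=
  alt2 br /\
  (forall x y z, br x (br y z) + br y (br z x) + br z (br x y) = 0).

Definition diff_op (br : V -> V -> V) (D : V -> V) : Prop :=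
  is_linear D /\
  forall x y, D (br x y) = br x (D y) - br y (D x) + br (D x) (D y).

Definition diff_lie (br : V -> V -> V) (D : V -> V) : Prop :=
  is_lie_bracket br /\ diff_op br D.

(* ---------- R[t]/(t^2) (x) g, modelled as pairs (a, b) = a + t b ---------- *)
(* dual numbers r + t s act by (r + t s)(a + t b) = r a + t (r b + s a) *)
Definition dscale (r s : R) (X : V * V) : V * V :=
  (r *: X.1, r *: X.2 + s *: X.1).
Definition dadd (X Y : V * V) : V * V := (X.1 + Y.1, X.2 + Y.2).

Definition dlinear (f : V * V -> V * V) : Prop :=
  forall r s X Y, f (dadd (dscale r s X) Y) = dadd (dscale r s (f X)) (f Y).

(* [.,.]_t = [.,.] + t om, extended bilinearly over R[t]/(t^2) *)
Definition brt (br om : V -> V -> V) (X Y : V * V) : V * V :=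
  (br X.1 Y.1, br X.1 Y.2 + br X.2 Y.1 + om X.1 Y.1).

(* D_t = D + t Dh, extended linearly over R[t]/(t^2) *)
Definition Dt (D Dh : V -> V) (X : V * V) : V * V :=
  (D X.1, D X.2 + Dh X.1).

Definition dual_lie_bracket (B : V * V -> V * V -> V * V) : Prop :=
  (forall X, dlinear (B X)) /\ (forall Y, dlinear (fun X => B X Y)) /\
  (forall X, B X X = (0, 0)) /\
  (forall X Y Z, dadd (dadd (B X (B Y Z)) (B Y (B Z X))) (B Z (B X Y)) = (0, 0)).

Definition dual_diff_op (B : V * V -> V * V -> V * V) (E : V * V -> V * V) : Prop :=
  dlinear E /\
  forall X Y, E (B X Y) =
    dadd (dadd (B X (E Y)) (dscale (-1) 0 (B Y (E X)))) (B (E X) (E Y)).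

Definition inf_deformation (br : V -> V -> V) (D : V -> V)
    (om : V -> V -> V) (Dh : V -> V) : Prop :=
  alt2 om /\ is_linear Dh /\
  dual_lie_bracket (brt br om) /\ dual_diff_op (brt br om) (Dt D Dh).

(* phi_t = Id + t N, extended linearly *)
Definition phit (N : V -> V) (X : V * V) : V * V := (X.1, X.2 + N X.1).

Definition equiv_deformation (br : V -> V -> V) (D : V -> V)
    (om1 : V -> V -> V) (Dh1 : V -> V) (om2 : V -> V -> V) (Dh2 : V -> V) : Prop :=
  exists N : V -> V, is_linear N /\
    (forall x y : V, phit N (brt br om1 (x, 0) (y, 0)) =
                     brt br om2 (phit N (x, 0)) (phit N (y, 0))) /\
    (forall X : V * V, Dt D Dh2 (phit N X) = phit N (Dt D Dh1 X)).

Definition adD (br : V -> V -> V) (D : V -> V) (x u : V) : V := br x u + br (D x) u.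

Definition dCE1 (br : V -> V -> V) (rho : V -> V -> V) (f : V -> V) (x y : V) : V :=
  rho x (f y) - rho y (f x) - f (br x y).
Definition dCE2 (br : V -> V -> V) (rho : V -> V -> V) (f : V -> V -> V) (x y z : V) : V :=
  rho x (f y z) - rho y (f x z) + rho z (f x y)
  - f (br x y) z + f (br x z) y - f (br y z) x.

Definition T1 (D : V -> V) (f : V -> V) (x : V) : V :=
  - (f (D x) - D (f x)).
Definition T2 (D : V -> V) (f : V -> V -> V) (x y : V) : V :=
  f (D x) y + f x (D y) + f (D x) (D y) - D (f x y).

Definition cochain2 (om : V -> V -> V) (th : V -> V) : Prop :=
  alt2 om /\ is_linear th.

(* 2-cocycles: \bar\delta (om, th) = (d_ad om, d_adD th + T om) = 0 *)
Definition cocycle2 (br : V -> V -> V) (D : V -> V) (om : V -> V -> V) (th : V -> V) : Prop :=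
  cochain2 om th /\
  (forall x y z, dCE2 br br om x y z = 0) /\
  (forall x y, dCE1 br (adD br D) th x y + T2 D om x y = 0).

(* cohomologous 2-cochains: difference is \bar\delta N = (d_ad N, T N), N in C^1 *)
Definition cohomologous (br : V -> V -> V) (D : V -> V)
    (om1 : V -> V -> V) (th1 : V -> V) (om2 : V -> V -> V) (th2 : V -> V) : Prop :=
  exists N : V -> V, is_linear N /\
    (forall x y, om1 x y - om2 x y = dCE1 br br N x y) /\
    (forall x, th1 x - th2 x = T1 D N x).

End Defs.

From mathcomp Require Import all_boot all_algebra.
From mathcomp Require Import reals.
Set Implicit Arguments.
Unset Strict Implicit.
Unset Printing Implicit Defensive.
Import GRing.Theory.
Local Open Scope ring_scope.

(* Write elements of R[t]/(t^2) (x) g as a + t b.  The t^0-components of the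
   Lie and difference-operator axioms for ([.,.]_t, D_t) are those of (g, D).
   Modulo Jacobi and difference-operator identities of (g, D), the
   t^1-component of the Jacobi identity is d_ad(om) and that of the
   difference-operator identity is d_adD(Dh) + T(om), so (om, Dh) generates a
   deformation iff it is a regular 2-cocycle.  Likewise, the t^1-components
   of "phi_t = Id + t N is a morphism of brackets intertwining D^1_t and
   D^2_t" say exactly that (om1, Dh1) - (om2, Dh2) is the coboundary of N. *)

Inductive zterm := ZAtom of nat | ZAdd of zterm & zterm | ZOpp of zterm | ZZero.

Section AbelianGroupIdentities.
Variable M : zmodType.

Fixpoint zterm_eval (env : seq M) (t : zterm) : M :=
  match t with
  | ZAtom n => nth 0 env n
  | ZAdd t1 t2 => zterm_eval env t1 + zterm_eval env t2
  | ZOpp t1 => - zterm_eval env t1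
  | ZZero => 0
  end.

(* Integer coefficient vectors: [c] stands for \sum_i c_i env_i. *)
Fixpoint coef_add (c d : seq int) : seq int :=
  match c, d with
  | [::], _ => d
  | _, [::] => c
  | a :: c', b :: d' => (a + b) :: coef_add c' d'
  end.

Definition coef_opp (c : seq int) : seq int := map -%R c.

Definition coef_atom (n : nat) : seq int := rcons (nseq n 0) 1.

Fixpoint coef_eval (env : seq M) (c : seq int) : M :=
  match env, c with
  | x :: env', a :: c' => x *~ a + coef_eval env' c'
  | _, _ => 0
  end.

Fixpoint zterm_coef (t : zterm) : seq int :=
  match t with
  | ZAtom n => coef_atom n
  | ZAdd t1 t2 => coef_add (zterm_coef t1) (zterm_coef t2)
  | ZOpp t1 => coef_opp (zterm_coef t1)
  | ZZero => [::]
  end.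

Lemma coef_eval_add env c d :
  coef_eval env (coef_add c d) = coef_eval env c + coef_eval env d.
Proof.
elim: env c d => [|x env IH] [|a c] [|b d] //=; rewrite ?addr0 ?add0r //.
by rewrite IH mulrzDr addrACA.
Qed.

Lemma coef_eval_opp env c : coef_eval env (coef_opp c) = - coef_eval env c.
Proof.
elim: env c => [|x env IH] [|a c] //=; rewrite ?oppr0 //.
by rewrite IH mulrNz opprD.
Qed.

Lemma coef_eval_atom env n : coef_eval env (coef_atom n) = nth 0 env n.
Proof.
elim: env n => [|x env IH] [|n] //=; last by rewrite IH mulr0z add0r.
by rewrite mulr1z; case: env {IH} => //= *; rewrite addr0.
Qed.

Lemma zterm_evalE env t : zterm_eval env t = coef_eval env (zterm_coef t).
Proof.
elim: t => [n|t1 IH1 t2 IH2|t1 IH1|] /=.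
- by rewrite coef_eval_atom.
- by rewrite coef_eval_add IH1 IH2.
- by rewrite coef_eval_opp IH1.
- by case: env.
Qed.

Lemma coef_eval0 env c : all (eq_op^~ 0) c -> coef_eval env c = 0.
Proof.
elim: env c => [|x env IH] [|a c] //= /andP[/eqP-> /IH->].
by rewrite mulr0z addr0.
Qed.

Lemma zterm_eval_eq env t1 t2 :
  all (eq_op^~ 0) (coef_add (zterm_coef t1) (coef_opp (zterm_coef t2))) ->
  zterm_eval env t1 = zterm_eval env t2.
Proof.
move=> /(coef_eval0 env) /eqP.
by rewrite coef_eval_add coef_eval_opp -!zterm_evalE subr_eq0 => /eqP.
Qed.

Lemma eq_iff_subr (u v p q : M) : u - v = p - q -> (u = v <-> p = q).
Proof.
move=> E; split=> H; apply/eqP; rewrite -subr_eq0; first by rewrite -E H subrr.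
by rewrite E H subrr.
Qed.

Lemma eq_iff_subrN (u v p q : M) : u - v = q - p -> (u = v <-> p = q).
Proof.
by move=> E; have {}E := eq_iff_subr E; split=> [/E.1/esym | /esym/E.2].
Qed.

End AbelianGroupIdentities.

Ltac zterm_index x env :=
  lazymatch env with
  | x :: _ => constr:(0%N)
  | _ :: ?env' => let n := zterm_index x env' in constr:(S n)
  end.

Ltac zterm_mem x env :=
  lazymatch env with
  | x :: _ => constr:(true)
  | _ :: ?env' => zterm_mem x env'
  | _ => constr:(false)
  end.

Ltac zterm_atoms t env :=
  lazymatch t with
  | @GRing.add _ ?a ?b => let env := zterm_atoms a env in zterm_atoms b env
  | @GRing.opp _ ?a => zterm_atoms a env
  | @GRing.zero _ => env
  | _ => let b := zterm_mem t env in
         lazymatch b with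
         | true => env
         | false => constr:(t :: env)
         end
  end.

Ltac zterm_reify t env :=
  lazymatch t with
  | @GRing.add _ ?a ?b =>
      let ra := zterm_reify a env in let rb := zterm_reify b env in
      constr:(ZAdd ra rb)
  | @GRing.opp _ ?a => let ra := zterm_reify a env in constr:(ZOpp ra)
  | @GRing.zero _ => constr:(ZZero)
  | _ => let n := zterm_index t env in constr:(ZAtom n)
  end.

(* Decides equalities in a zmodType that hold in every abelian group, the
   maximal non-additive subterms being treated as atoms. *)
Ltac abel :=
  lazymatch goal with
  | |- @eq ?T ?l ?r =>
    let env := zterm_atoms l (@nil T) in
    let env := zterm_atoms r env in
    let tl := zterm_reify l env in
    let tr := zterm_reify r env in
    change (zterm_eval env tl = zterm_eval env tr);
    apply: zterm_eval_eq; vm_compute; reflexivity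
  end.

Lemma pair_eq_snd (A B : Type) (a : A) (b c : B) : (a, b) = (a, c) <-> b = c.
Proof. by split=> [[]|->]. Qed.

Section DeformationsOfDifferenceLieAlgebras.
Variables (R : realType) (V : lmodType R).
Implicit Types (x y z : V) (X Y Z : V * V) (N Dh : V -> V) (b om : V -> V -> V).

Section LinearMaps.
Variable f : V -> V.
Hypothesis f_lin : is_linear f.

Lemma is_linearD x y : f (x + y) = f x + f y.
Proof. by have := f_lin 1 x y; rewrite !scale1r. Qed.

Lemma is_linear0 : f 0 = 0.
Proof. by apply: (addrI (f 0)); rewrite -is_linearD !addr0. Qed.

Lemma is_linearZ (a : R) x : f (a *: x) = a *: f x.
Proof. by have := f_lin a x 0; rewrite !addr0 is_linear0 addr0. Qed.

Lemma is_linearN x : f (- x) = - f x.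
Proof. by rewrite -scaleN1r is_linearZ scaleN1r. Qed.

End LinearMaps.

Section BilinearMaps.
Variable b : V -> V -> V.
Hypothesis b_bilin : is_bilinear b.

Lemma is_bilinearDr x y z : b x (y + z) = b x y + b x z.
Proof. exact: is_linearD (b_bilin.1 x) _ _. Qed.

Lemma is_bilinearDl x y z : b (x + y) z = b x z + b y z.
Proof. exact: is_linearD (b_bilin.2 z) _ _. Qed.

Lemma is_bilinearZr (a : R) x y : b x (a *: y) = a *: b x y.
Proof. exact: is_linearZ (b_bilin.1 x) _ _. Qed.

Lemma is_bilinearZl (a : R) x y : b (a *: x) y = a *: b x y.
Proof. exact: is_linearZ (b_bilin.2 y) _ _. Qed.

Lemma is_bilinearNr x y : b x (- y) = - b x y.
Proof. exact: is_linearN (b_bilin.1 x) _. Qed.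

Lemma is_bilinear0r x : b x 0 = 0.
Proof. exact: is_linear0 (b_bilin.1 x). Qed.

Lemma is_bilinear0l y : b 0 y = 0.
Proof. exact: is_linear0 (b_bilin.2 y). Qed.

End BilinearMaps.

Lemma alt2_skew b : alt2 b -> forall x y, b x y = - b y x.
Proof.
move=> [b_bilin b_xx] x y; apply/eqP; rewrite -subr_eq0 opprK.
have := b_xx (x + y).
by rewrite (is_bilinearDl b_bilin) !(is_bilinearDr b_bilin) !b_xx add0r addr0 => ->.
Qed.

Lemma daddr0 X : dadd X (0, 0) = X.
Proof. by case: X => x1 x2; rewrite /dadd /= !addr0. Qed.

Lemma dadd_eq_id X Y : dadd X Y = X -> Y = (0, 0).
Proof.
case: X Y => x1 x2 [y1 y2] [].
by rewrite -{2}[x1]addr0 -{2}[x2]addr0 => /addrI-> /addrI->.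
Qed.

Lemma Dt_dlinear D Dh : is_linear D -> is_linear Dh -> dlinear (Dt D Dh).
Proof.
move=> D_lin Dh_lin r s [x1 x2] [y1 y2]; rewrite /Dt /dadd /dscale /=.
congr pair; rewrite !(is_linearD D_lin) ?(is_linearD Dh_lin) !(is_linearZ D_lin).
  by [].
by rewrite (is_linearZ Dh_lin) !scalerDr; abel.
Qed.

Section BracketOnDualNumbers.
Variable br : V -> V -> V.
Hypothesis br_alt : alt2 br.

Definition jacobiator x y z := br x (br y z) + br y (br z x) + br z (br x y).

Lemma dCE2_cyclic om : alt2 om -> forall x y z,
  dCE2 br br om x y z = br x (om y z) + om x (br y z)
    + (br y (om z x) + om y (br z x)) + (br z (om x y) + om z (br x y)).
Proof.
move=> om_alt x y z; rewrite /dCE2 (alt2_skew om_alt x z) (is_bilinearNr br_alt.1).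
rewrite (alt2_skew om_alt (br x y) z) (alt2_skew om_alt (br x z) y).
rewrite (alt2_skew om_alt (br y z) x) (alt2_skew br_alt x z).
by rewrite (is_bilinearNr om_alt.1); abel.
Qed.

Lemma brt_dlinear_r om : is_bilinear om -> forall X, dlinear (brt br om X).
Proof.
move=> om_bilin [x1 x2] r s [y1 y2] [z1 z2]; rewrite /brt /dadd /dscale /=.
have br_bilin := br_alt.1.
congr pair; rewrite ?(is_bilinearDr br_bilin) ?(is_bilinearDr om_bilin).
  by rewrite (is_bilinearZr br_bilin).
by rewrite !(is_bilinearZr br_bilin) (is_bilinearZr om_bilin) !scalerDr; abel.
Qed.

Lemma brt_dlinear_l om : is_bilinear om -> forall Y, dlinear (brt br om ^~ Y).
Proof.
move=> om_bilin [y1 y2] r s [x1 x2] [z1 z2]; rewrite /brt /dadd /dscale /=.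
have br_bilin := br_alt.1.
congr pair; rewrite ?(is_bilinearDl br_bilin) ?(is_bilinearDl om_bilin).
  by rewrite (is_bilinearZl br_bilin).
by rewrite !(is_bilinearZl br_bilin) (is_bilinearZl om_bilin) !scalerDr; abel.
Qed.

Lemma brt_alt om : alt2 om -> forall X, brt br om X X = (0, 0).
Proof.
move=> om_alt [x1 x2]; rewrite /brt /= br_alt.2 om_alt.2.
by rewrite (alt2_skew br_alt x2 x1) subrr add0r.
Qed.

Lemma brt_jacobiator om : alt2 om -> forall X Y Z,
  dadd (dadd (brt br om X (brt br om Y Z)) (brt br om Y (brt br om Z X)))
       (brt br om Z (brt br om X Y)) =
  (jacobiator X.1 Y.1 Z.1,
   jacobiator X.1 Y.1 Z.2 + jacobiator X.1 Y.2 Z.1 + jacobiator X.2 Y.1 Z.1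
     + dCE2 br br om X.1 Y.1 Z.1).
Proof.
move=> om_alt [x1 x2] [y1 y2] [z1 z2]; rewrite /dadd /brt /=; congr pair.
by rewrite dCE2_cyclic // !(is_bilinearDr br_alt.1) /jacobiator; abel.
Qed.

Lemma dual_lie_bracket_brtP om :
  (forall x y z, jacobiator x y z = 0) -> alt2 om ->
  dual_lie_bracket (brt br om) <-> (forall x y z, dCE2 br br om x y z = 0).
Proof.
move=> jacobi om_alt; split=> [[_ [_ [_ jacobit]]] x y z | om_closed].
  have := brt_jacobiator om_alt (x, 0) (y, 0) (z, 0).
  by rewrite jacobit !jacobi !add0r => -[].
split; first exact: brt_dlinear_r om_alt.1.
split; first exact: brt_dlinear_l om_alt.1.
split; first exact: brt_alt.
by move=> X Y Z; rewrite brt_jacobiator // !jacobi om_closed !addr0.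
Qed.

Variable D : V -> V.

Section DifferenceOperator.
Hypothesis D_diff : diff_op br D.

Lemma Dt_brt om Dh : alt2 om -> forall X Y,
  Dt D Dh (brt br om X Y) =
  dadd (dadd (dadd (brt br om X (Dt D Dh Y))
                   (dscale (-1) 0 (brt br om Y (Dt D Dh X))))
             (brt br om (Dt D Dh X) (Dt D Dh Y)))
       (0, - (dCE1 br (adD br D) Dh X.1 Y.1 + T2 D om X.1 Y.1)).
Proof.
move=> om_alt [x1 x2] [y1 y2]; have [D_lin D_br] := D_diff.
have br_bilin := br_alt.1.
rewrite /Dt /brt /dadd /dscale /dCE1 /adD /T2 /= !scaleN1r !scale0r; congr pair.
  by rewrite D_br !addr0.
rewrite !(is_linearD D_lin) !D_br !(is_bilinearDr br_bilin) !(is_bilinearDl br_bilin).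
rewrite (alt2_skew br_alt (D y1) (Dh x1)) (alt2_skew om_alt (D x1) y1).
by rewrite !opprD; abel.
Qed.

Lemma dual_diff_op_DtP om Dh : alt2 om -> is_linear Dh ->
  dual_diff_op (brt br om) (Dt D Dh) <->
  (forall x y, dCE1 br (adD br D) Dh x y + T2 D om x y = 0).
Proof.
move=> om_alt Dh_lin; split=> [[_ Dt_diff] x y | Dh_closed].
  have := Dt_brt Dh om_alt (x, 0) (y, 0); rewrite Dt_diff => /esym/dadd_eq_id.
  by case=> /eqP; rewrite oppr_eq0 => /eqP.
split; first exact: Dt_dlinear D_diff.1 Dh_lin.
by move=> X Y; rewrite Dt_brt // Dh_closed oppr0 daddr0.
Qed.

Lemma inf_deformation_cocycle2 om Dh :
  (forall x y z, jacobiator x y z = 0) ->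
  inf_deformation br D om Dh <-> cocycle2 br D om Dh.
Proof.
move=> jacobi; split.
  move=> [om_alt [Dh_lin [/(dual_lie_bracket_brtP jacobi om_alt) om_closed
                          /(dual_diff_op_DtP om_alt Dh_lin) Dh_closed]]].
  by [].
move=> [[om_alt Dh_lin] [/(dual_lie_bracket_brtP jacobi om_alt) brt_lie
                         /(dual_diff_op_DtP om_alt Dh_lin) Dt_diff]].
by [].
Qed.

End DifferenceOperator.

Lemma phit_brt_morphP om1 om2 N x y :
  phit N (brt br om1 (x, 0) (y, 0)) = brt br om2 (phit N (x, 0)) (phit N (y, 0))
  <-> om1 x y - om2 x y = dCE1 br br N x y.
Proof.
rewrite /phit /brt /dCE1 /= (is_bilinear0r br_alt.1) (is_bilinear0l br_alt.1).
rewrite !add0r pair_eq_snd; apply: eq_iff_subr.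
by rewrite (alt2_skew br_alt y (N x)); abel.
Qed.

Lemma phit_DtP Dh1 Dh2 N : is_linear D -> forall X,
  Dt D Dh2 (phit N X) = phit N (Dt D Dh1 X) <-> Dh1 X.1 - Dh2 X.1 = T1 D N X.1.
Proof.
move=> D_lin [x1 x2]; rewrite /phit /Dt /T1 /= (is_linearD D_lin) pair_eq_snd.
by apply: eq_iff_subrN; abel.
Qed.

Lemma equiv_deformation_cohomologous om1 Dh1 om2 Dh2 : is_linear D ->
  equiv_deformation br D om1 Dh1 om2 Dh2 <-> cohomologous br D om1 Dh1 om2 Dh2.
Proof.
move=> D_lin; split=> -[N [N_lin [N_br N_D]]]; exists N; split=> //; split.
- by move=> x y; apply/phit_brt_morphP.
- by move=> x; apply/(phit_DtP Dh1 Dh2 N D_lin (x, 0)).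
- by move=> x y; apply/phit_brt_morphP.
- by move=> X; apply/phit_DtP.
Qed.

End BracketOnDualNumbers.
End DeformationsOfDifferenceLieAlgebras.

Theorem theorem4p6 (R : realType) (V : lmodType R)
    (br : V -> V -> V) (D : V -> V) (HgD : diff_lie br D) :
  (forall (om : V -> V -> V) (Dh : V -> V),
      inf_deformation br D om Dh -> cocycle2 br D om Dh) /\
  (forall (om : V -> V -> V) (Dh : V -> V),
      cocycle2 br D om Dh -> inf_deformation br D om Dh) /\
  (forall (om1 : V -> V -> V) (Dh1 : V -> V) (om2 : V -> V -> V) (Dh2 : V -> V),
      inf_deformation br D om1 Dh1 -> inf_deformation br D om2 Dh2 ->
      (equiv_deformation br D om1 Dh1 om2 Dh2 <-> cohomologous br D om1 Dh1 om2 Dh2)).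
Proof.
have [[br_alt jacobi] D_diff] := HgD.
have deformationE om Dh := inf_deformation_cocycle2 br_alt D_diff om Dh jacobi.
split; [|split].
- by move=> om Dh /deformationE.
- by move=> om Dh /deformationE.
- move=> om1 Dh1 om2 Dh2 _ _.
  exact (equiv_deformation_cohomologous br_alt om1 Dh1 om2 Dh2 D_diff.1).
Qed.
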